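(* Consider an $\mathsf{oSQMA}$ verifier $\{Q_n\}$ whose circuits consist only of Hadamard, Toffoli and NOT gates. Then there is a polynomial $l$ such that for every yes-instance $x$, the maximum acceptance probability of $Q_{|x|}$ on $x$ (over all witness states) equals $\frac{p}{q}$ for some $p, q \in \mathbb{N}$ with $\log p, \log q \leq l(|x|)$.
   Context: $\Sigma=\{0,1\}$. For a nonempty $S \subseteq [2^p]$, the subset state is $\ket{S} := \frac{1}{\sqrt{|S|}}\sum_{i \in S}\ket{i}$ (computational basis indexed by $[2^p]$). $\mathsf{oSQMA}$: a promise problem $A=(A_{yes},A_{no})$ is in $\mathsf{oSQMA}$ iff there exist polynomials $p,q$ and a polynomial-time uniform family of quantum circuits $\{Q_n\}$ (the verifier), where $Q_n$ takes $x \in \Sigma^*$ with $|x|=n$, a $p(n)$-qubit state, and $q(n)$ ancilla qubits in $\ket{0}^{\otimes q(n)}$, such that: if $x\in A_{yes}$ there is a subset $S \subseteq [2^{p(n)}]$ such that $Q_n$ accepts $(x,\ket{S})$ with probability at least $2/3$ and $\ket{S}$ maximizes the acceptance probability over all $p(n)$-qubit states; if $x \in A_{no}$ then every $p(n)$-qubit state is accepted with probability at most $1/3$. Acceptance means measuring a designated output qubit in the computational basis and obtaining $1$. *)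

From mathcomp Require Import all_boot all_order all_algebra.
Set Implicit Arguments. Unset Strict Implicit. Unset Printing Implicit Defensive.
Import Order.TTheory GRing.Theory Num.Theory.
Local Open Scope ring_scope.

Inductive gate : Type :=
  | GH   of nat
  | GNOT of nat
  | GTOF of nat & nat & nat.    (* Toffoli: controls a b, target c *)

Definition gate_wf (m : nat) (g : gate) : bool :=
  match g with
  | GH i => (i < m)%N
  | GNOT i => (i < m)%N
  | GTOF a b c => [&& (a < m)%N, (b < m)%N, (c < m)%N, a != b, a != c & b != c]
  end.

Definition basis (m : nat) := {ffun 'I_m -> bool}.

(* Bit k of a basis state (false if out of range). *)
Definition getb m (s : basis m) (k : nat) : bool :=
  if insub k is Some i then s i else false.

Definition setb m (s : basis m) (k : nat) (v : bool) : basis m :=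
  [ffun j : 'I_m => if val j == k then v else s j].

Section Quantum.
Variable C : numClosedFieldType.

(* A (not necessarily normalized) state vector: amplitudes on basis states. *)
Definition qstate m := basis m -> C.

Definition apply_gate m (g : gate) (psi : qstate m) : qstate m :=
  fun s =>
    match g with
    | GNOT i => psi (setb s i (~~ getb s i))
    | GTOF a b c => psi (if getb s a && getb s b then setb s c (~~ getb s c) else s)
    | GH i => (sqrtC 2)^-1 *
              (psi (setb s i false) + (if getb s i then -1 else 1) * psi (setb s i true))
    end.

Definition run m (c : seq gate) (psi : qstate m) : qstate m :=
  foldl (fun phi g => apply_gate g phi) psi c.

Definition unit_state m (psi : qstate m) : Prop :=
  \sum_(b : basis m) `|psi b| ^+ 2 = 1.

Definition subset_state p (S : {set basis p}) : qstate p :=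
  fun b => if b \in S then (sqrtC (#|S|%:R))^-1 else 0.

(* Initial state |x> (x) |psi> (x) |0...0> on n + p + q qubits, n = size x:
   qubits 0..n-1 hold x, qubits n..n+p-1 the witness, the rest ancillas. *)
Definition init_state (x : seq bool) (p q : nat) (psi : qstate p)
  : qstate (size x + p + q) :=
  fun s =>
    if [forall j : 'I_(size x + p + q),
          ((j < size x)%N ==> (s j == nth false x j)) &&
          ((size x + p <= j)%N ==> ~~ s j)]
    then psi [ffun j : 'I_p => getb s (size x + j)]
    else 0.
Arguments init_state x {p} q psi.

Definition acc_prob (c : seq gate) (o : nat) (x : seq bool) (p q : nat)
  (psi : qstate p) : C :=
  \sum_(s : basis (size x + p + q) | getb s o)
     `|run c (init_state x q psi) s| ^+ 2.
Arguments acc_prob c o x {p} q psi.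

Definition is_max_acc (c : seq gate) (o : nat) (x : seq bool) (p q : nat) (v : C)
  : Prop :=
  (forall psi : qstate p, unit_state psi -> acc_prob c o x q psi <= v) /\
  (exists2 psi : qstate p, unit_state psi & acc_prob c o x q psi = v).

Definition oSQMA_verifier (Ayes Ano : pred (seq bool)) (p q : {poly nat})
  (Q : nat -> seq gate) (out : nat -> nat) : Prop :=
  (exists sz : {poly nat}, forall n, (size (Q n) <= sz.[n])%N) /\
  (forall n, all (gate_wf (n + p.[n] + q.[n])) (Q n)) /\
  (forall n, (out n < n + p.[n] + q.[n])%N) /\
  (forall x, Ayes x ->
     exists S : {set basis p.[size x]},
       [/\ S != set0,
           acc_prob (Q (size x)) (out (size x)) x q.[size x] (subset_state S) >= 2%:R / 3%:R
         & forall psi : qstate p.[size x], unit_state psi ->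
             acc_prob (Q (size x)) (out (size x)) x q.[size x] psi
             <= acc_prob (Q (size x)) (out (size x)) x q.[size x] (subset_state S)]) /\
  (forall x, Ano x ->
     forall psi : qstate p.[size x], unit_state psi ->
       acc_prob (Q (size x)) (out (size x)) x q.[size x] psi <= 1 / 3%:R).

End Quantum.

(* Every gate other than the Hadamard gate permutes basis states, and the
   Hadamard gate maps integer combinations of basis states to integer
   combinations scaled by 1/sqrt 2.  Starting from a subset state, whose
   amplitudes are 0 or 1/sqrt |S|, after K Hadamard gates every amplitude is
   an integer of absolute value at most 2^K times 2^(-K/2)/sqrt |S|, so the
   acceptance probability is an integer over 2^K |S|.  Since the verifier is
   maximized by a subset state and K is bounded by the circuit size, the
   maximum acceptance probability is a fraction with polynomially many bits. *)
From mathcomp Require Import all_boot all_order all_algebra.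
From mathcomp Require Import zify ring.
Set Implicit Arguments. Unset Strict Implicit. Unset Printing Implicit Defensive.
Import Order.TTheory GRing.Theory Num.Theory.
Local Open Scope ring_scope.

Definition is_hadamard (g : gate) : bool := if g is GH _ then true else false.

Definition hadamard_count (c : seq gate) : nat := count is_hadamard c.

Lemma card_basis m : #|basis m| = (2 ^ m)%N.
Proof. by rewrite card_ffun card_bool card_ord. Qed.

Section IntegerAmplitudes.
Variables (C : numClosedFieldType) (m : nat).

Let u : C := (sqrtC 2)^-1.

Definition scaled_int_state (k : nat) (t : C) (psi : qstate C m) : Prop :=
  exists2 a : basis m -> int,
    forall s, psi s = u ^+ k * (a s)%:~R * t & forall s, (`|a s| <= 2 ^ k)%N.

Lemma apply_gate_scaled g k t psi :
  scaled_int_state k t psi ->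
  scaled_int_state (k + is_hadamard g) t (apply_gate g psi).
Proof.
case=> a Hpsi Ha; case: g => [i|i|i j l] /=; rewrite ?addn0.
- exists (fun s => a (setb s i false)
                  + (if getb s i then -1 else 1) * a (setb s i true)) => s /=.
    rewrite !Hpsi /u addn1 exprS.
    by case: (getb s i); rewrite ?mulN1r ?mul1r ?rmorphD ?rmorphN; ring.
  have := Ha (setb s i false); have := Ha (setb s i true).
  by rewrite addn1 expnS; case: (getb s i); rewrite ?mulN1r ?mul1r; lia.
- by exists (fun s => a (setb s i (~~ getb s i))) => s; [exact: Hpsi | exact: Ha].
- exists (fun s => a (if getb s i && getb s j then setb s l (~~ getb s l) else s));
    move=> s; [exact: Hpsi | exact: Ha].
Qed.

Lemma run_scaled c k t psi :
  scaled_int_state k t psi ->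
  scaled_int_state (k + hadamard_count c) t (run c psi).
Proof.
elim: c k psi => [|g c IHc] k psi Hpsi /=; first by rewrite addn0.
by rewrite /hadamard_count /= addnA; apply/IHc/apply_gate_scaled.
Qed.

End IntegerAmplitudes.

Lemma norm_invsqrtC_nat_sqr (C : numClosedFieldType) k :
  `|(sqrtC (k%:R : C))^-1| ^+ 2 = k%:R^-1.
Proof.
have [->|k0] := eqVneq k 0%N; first by rewrite sqrtC0 !invr0 normr0 expr0n.
by rewrite normrV ?unitfE ?sqrtC_eq0 ?pnatr_eq0 // ger0_norm ?sqrtC_ge0 ?ler0n
  // exprVn sqrtCK.
Qed.

Lemma unit_subset_state (C : numClosedFieldType) p (S : {set basis p}) :
  S != set0 -> unit_state (subset_state C S).
Proof.
move=> S0; rewrite /unit_state (eq_bigr (fun b => if b \in S then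
  `|(sqrtC (#|S|%:R : C))^-1| ^+ 2 else 0)); last first.
  by move=> b _; rewrite /subset_state; case: ifP; rewrite ?normr0 ?expr0n.
rewrite -big_mkcond sumr_const norm_invsqrtC_nat_sqr -[_ *+ #|S|]mulr_natr mulVf //.
by rewrite pnatr_eq0 -lt0n card_gt0.
Qed.

Lemma init_subset_state_scaled (C : numClosedFieldType) x p q
    (S : {set basis p}) :
  scaled_int_state 0 (sqrtC (#|S|%:R : C))^-1
    (@init_state C x p q (subset_state C S)).
Proof.
exists (fun s : basis (size x + p + q) => if [forall j : 'I_(size x + p + q),
          ((j < size x)%N ==> (s j == nth false x j)) &&
          ((size x + p <= j)%N ==> ~~ s j)]
    then (if [ffun j : 'I_p => getb s (size x + j)] \in S then 1 else 0)
    else 0 : int) => s.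
  rewrite /init_state /subset_state expr0 mul1r.
  by case: ifP => _; [case: ifP => _|]; rewrite ?mul1r ?mul0r.
by case: ifP => _; [case: ifP => _|].
Qed.

Lemma acc_prob_subset_state (C : numClosedFieldType) c o x p q
    (S : {set basis p}) :
  let K := hadamard_count c in
  exists2 pp : nat, (pp <= 2 ^ (size x + p + q + K.*2))%N &
    acc_prob c o x q (subset_state C S) = pp%:R / (2 ^ K * #|S|)%:R.
Proof.
move=> K; have [a Hrun Ha] := run_scaled c (init_subset_state_scaled C x q S).
rewrite add0n -/K in Hrun Ha.
exists (\sum_(s : basis (size x + p + q) | getb s o) `|a s| ^ 2)%N.
  apply: (@leq_trans (\sum_(s : basis (size x + p + q) | getb s o) (2 ^ K) ^ 2)).
    by apply: leq_sum => s _; rewrite leq_exp2r.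
  rewrite sum_nat_const -expnM muln2 expnD leq_mul2r.
  by apply/orP; right; rewrite -card_basis max_card.
rewrite /acc_prob natr_sum mulr_suml; apply: eq_bigr => s _.
rewrite Hrun !normrM !exprMn normrX -exprM mulnC exprM.
rewrite (norm_invsqrtC_nat_sqr C 2) norm_invsqrtC_nat_sqr.
by rewrite -intr_norm -natr_absz natrX natrM natrX invfM exprVn; ring.
Qed.

Theorem mainTheorem10 (C : numClosedFieldType)
  (Ayes Ano : pred (seq bool)) (p q : {poly nat})
  (Q : nat -> seq gate) (out : nat -> nat) :
  (forall x, ~~ (Ayes x && Ano x)) ->
  oSQMA_verifier C Ayes Ano p q Q out ->
  exists l : {poly nat}, forall x : seq bool, Ayes x ->
    exists pp qq : nat,
      [/\ (0 < qq)%N, (pp <= 2 ^ l.[size x])%N, (qq <= 2 ^ l.[size x])%N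
        & is_max_acc (Q (size x)) (out (size x)) x p.[size x] q.[size x]
            (pp%:R / qq%:R : C)].
Proof.
move=> _ [[sz Hsz] [_ [_ [Hyes _]]]].
exists ('X + p + q + sz + sz) => x /Hyes [S [S0 _ Hmax]].
set n := size x; rewrite !hornerD hornerX.
have [pp Hpp Hacc] := acc_prob_subset_state C (Q n) (out n) x q.[n] S.
rewrite -/n in Hpp.
have HK : (hadamard_count (Q n) <= sz.[n])%N := leq_trans (count_size _ _) (Hsz n).
have HS : (#|S| <= 2 ^ p.[n])%N by rewrite -card_basis max_card.
exists pp, (2 ^ hadamard_count (Q n) * #|S|)%N; split.
- by rewrite muln_gt0 expn_gt0 card_gt0.
- by apply: (leq_trans Hpp); rewrite leq_exp2l //; lia.
- apply: (leq_trans (leq_mul (leqnn _) HS)).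
  by rewrite -expnD leq_exp2l //; lia.
- rewrite -Hacc; split; first exact: Hmax.
  by exists (subset_state C S); first exact: unit_subset_state.
Qed.
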